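(* Let $R\in\mathrm{SO}(3)$ and let $q_s',q_s''\in\mathbb R^3$ for $s\in\{i,j,k\}$. Let $G_{ijk}$ be the $3\times3$ matrix whose rows are $(Rq_i'\times q_i'')^\top$, $(Rq_j'\times q_j'')^\top$, $(Rq_k'\times q_k'')^\top$, and let $M_{ijk}$ be the $6\times 6$ matrix $$M_{ijk}=\begin{bmatrix} q_i'' & -Rq_i' & -q_j'' & Rq_j' & 0 & 0\\ q_i'' & -Rq_i' & 0 & 0 & -q_k'' & Rq_k'\end{bmatrix}$$ (each entry a $3\times1$ block), which is the coefficient matrix of the linear system in $(\lambda_i,\mu_i,\lambda_j,\mu_j,\lambda_k,\mu_k)$ obtained from the equations $\lambda_s q_s''=\mu_s Rq_s'+t$ ($s=i,j,k$) by subtracting the $j$-th and $k$-th equations from the $i$-th. Then $\det G_{ijk}=\pm\det M_{ijk}$.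
   Context: $q_s'$ and $q_s''$ are the (homogeneous) image coordinates of the $s$-th point correspondence in the first and second calibrated camera, and $R$ is the relative rotation. The epipolar constraint $q_s''^\top[t]_\times R q_s'=0$ is linear in $t$ and can be written as $(Rq_s'\times q_s'')^\top t=0$ up to sign; $G_{ijk}$ collects these rows for three correspondences. Here $[a]_\times$ denotes the skew-symmetric matrix with $[a]_\times b=a\times b$. *)

From HB Require Import structures.
From mathcomp Require Import all_boot all_order all_algebra.
Set Implicit Arguments. Unset Strict Implicit. Unset Printing Implicit Defensive.
Import Order.TTheory GRing.Theory Num.Theory.
Local Open Scope ring_scope.

Definition cross (F : comNzRingType) (a b : 'cV[F]_3) : 'cV[F]_3 :=
  \col_(i < 3)
    (if i == 0 :> nat then a 1 0 * b 2%:R 0 - a 2%:R 0 * b 1 0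
     else if i == 1 :> nat then a 2%:R 0 * b 0 0 - a 0 0 * b 2%:R 0
     else a 0 0 * b 1 0 - a 1 0 * b 0 0).

Definition is_SO3 (F : comNzRingType) (Rm : 'M[F]_3) : Prop :=
  Rm^T *m Rm = 1%:M /\ \det Rm = 1.

Definition Gmat (F : comNzRingType) (Rm : 'M[F]_3)
  (qi' qi'' qj' qj'' qk' qk'' : 'cV[F]_3) : 'M[F]_3 :=
  col_mx (cross (Rm *m qi') qi'')^T
    (col_mx (cross (Rm *m qj') qj'')^T (cross (Rm *m qk') qk'')^T).

Definition Mmat (F : comNzRingType) (Rm : 'M[F]_3)
  (qi' qi'' qj' qj'' qk' qk'' : 'cV[F]_3) : 'M[F]_6 :=
  col_mx
    (row_mx qi'' (row_mx (- (Rm *m qi')) (row_mx (- qj'') (row_mx (Rm *m qj')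
       (row_mx (0 : 'cV[F]_3) (0 : 'cV[F]_3))))))
    (row_mx qi'' (row_mx (- (Rm *m qi')) (row_mx (0 : 'cV[F]_3) (row_mx (0 : 'cV[F]_3)
       (row_mx (- qk'') (Rm *m qk')))))).

From HB Require Import structures.
From mathcomp Require Import all_boot all_order all_algebra.
From mathcomp Require Import ring.
Set Implicit Arguments. Unset Strict Implicit. Unset Printing Implicit Defensive.
Import Order.TTheory GRing.Theory Num.Theory.
Local Open Scope ring_scope.

(* Write a_s = R q_s' and b_s = q_s''.  We prove the
   sharper statement det G_ijk = det M_ijk for ARBITRARY vectors a_s, b_s over
   any commutative ring; in particular neither the orthogonality nor the
   orientation of R plays a role.  (Conceptually: a Laplace expansion of det M
   along its first three rows leaves two terms, which the Binet-Cauchy identity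
   (A.C)(B.D) - (A.D)(B.C) = (A x B).(C x D) recombines into the triple product
   (a_i x b_i).((a_j x b_j) x (a_k x b_k)) = det G.)
   The formal proof checks this degree-6 polynomial identity symbolically:
   1. a matrix given by the list of its rows has as determinant a recursive
      cofactor expansion along the first row, which Rocq evaluates by
      simplification ([det_mx_of_rows]);
   2. entries of nested block matrices are computed at numeral indices
      ([col_mx_entry], [row_mx_entry]), which writes G and M as lists of rows;
   3. both expansions are then equal by commutative ring normalization. *)

Section DeterminantOfRows.
Variable F : comNzRingType.

Definition mx_of_rows n (rs : seq (seq F)) : 'M[F]_n :=
  \matrix_(i < n, j < n) (nth [::] rs i)`_j.

Definition drop_nth (j : nat) (s : seq F) : seq F := take j s ++ drop j.+1 s.

(* f 0 + ... + f (k-1), as a fixpoint so that it unfolds by simplification. *)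
Fixpoint sum_upto (k : nat) (f : nat -> F) : F :=
  if k is k'.+1 then sum_upto k' f + f k' else 0.

Fixpoint laplace n (rs : seq (seq F)) : F :=
  if n is n'.+1 then
    sum_upto n (fun j => (-1) ^+ j * (head [::] rs)`_j *
                         laplace n' (map (drop_nth j) (behead rs)))
  else 1.

Lemma sum_uptoE k (f : nat -> F) : \sum_(j < k) f j = sum_upto k f.
Proof. by elim: k => [|k IHk]; rewrite ?big_ord0 // big_ord_recr IHk. Qed.

Lemma nth_drop_nth j s l : (drop_nth j s)`_l = s`_(bump j l).
Proof.
rewrite /drop_nth /bump; have [ltjs|lesj] := ltnP j (size s).
  rewrite nth_cat size_take ltjs; case: ltnP => [ltlj|lejl].
    by rewrite add0n nth_take.
  by rewrite add1n nth_drop addSn subnKC.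
rewrite take_oversize // drop_oversize ?cats0 ?(leq_trans lesj) //.
case: ltnP => [ltlj|lejl]; first by rewrite add0n.
by rewrite add1n !nth_default // ?(leq_trans lesj) // leqW.
Qed.

Lemma laplaceS n rs : laplace n.+1 rs =
  sum_upto n.+1 (fun j => (-1) ^+ j * (head [::] rs)`_j *
                          laplace n (map (drop_nth j) (behead rs))).
Proof. by []. Qed.

Lemma det_mx_of_rows n rs : \det (mx_of_rows n rs) = laplace n rs.
Proof.
elim: n rs => [|n IHn] rs; first by rewrite det_mx00.
rewrite (expand_det_row _ ord0) laplaceS -sum_uptoE; apply: eq_bigr => j _.
rewrite /cofactor mxE nth0 add0n -IHn mulrCA mulrA; congr (_ * \det _).
apply/matrixP => k l; rewrite !mxE /= /bump leq0n add1n.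
have [ltk|lek] := ltnP k (size (behead rs)).
  by rewrite (nth_map [::]) // nth_drop_nth nth_behead.
rewrite [nth [::] (map _ _) k]nth_default ?size_map //.
rewrite [nth [::] rs _]nth_default ?nth_nil //.
by case: rs lek => [|r rs] /=; rewrite ?ltnS.
Qed.

End DeterminantOfRows.

(* Entries of block matrices; at numeral indices the conditions compute. *)
Section BlockEntries.
Variable R : Type.

Lemma col_mx_entry m1 m2 n (A : 'M[R]_(m1.+1, n)) (B : 'M[R]_(m2.+1, n)) i j :
  col_mx A B i j =
  if (i < m1.+1)%N then A (inord i) j else B (inord (i - m1.+1)) j.
Proof.
case: splitP => k ik.
  by rewrite (_ : i = lshift _ k) ?col_mxEu ?inord_val //; apply/val_inj.
by rewrite (_ : i = rshift _ k) ?col_mxEd /= ?addKn ?inord_val //; apply/val_inj.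
Qed.

Lemma row_mx_entry m n1 n2 (A : 'M[R]_(m, n1.+1)) (B : 'M[R]_(m, n2.+1)) i j :
  row_mx A B i j =
  if (j < n1.+1)%N then A i (inord j) else B i (inord (j - n1.+1)).
Proof.
case: splitP => k jk.
  by rewrite (_ : j = lshift _ k) ?row_mxEl ?inord_val //; apply/val_inj.
by rewrite (_ : j = rshift _ k) ?row_mxEr /= ?addKn ?inord_val //; apply/val_inj.
Qed.

End BlockEntries.

Lemma inord_numerals :
  [/\ inord 0 = 0 :> 'I_3, inord 1 = 1 :> 'I_3, inord 2 = 2%:R :> 'I_3
    & inord 0 = 0 :> 'I_1].
Proof. by split; apply/val_inj; rewrite /= inordK. Qed.

Section EpipolarMatrices.
Variable F : comNzRingType.
Implicit Types ai bi aj bj ak bk : 'cV[F]_3.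

Definition cross_rows_mx ai bi aj bj ak bk : 'M[F]_3 :=
  col_mx (cross ai bi)^T (col_mx (cross aj bj)^T (cross ak bk)^T).

Definition epipolar_system_mx ai bi aj bj ak bk : 'M[F]_6 :=
  col_mx
    (row_mx bi (row_mx (- ai) (row_mx (- bj) (row_mx aj
       (row_mx (0 : 'cV[F]_3) (0 : 'cV[F]_3))))))
    (row_mx bi (row_mx (- ai) (row_mx (0 : 'cV[F]_3) (row_mx (0 : 'cV[F]_3)
       (row_mx (- bk) ak))))).

Definition coords (v : 'cV[F]_3) : seq F := [:: v 0 0; v 1 0; v 2%:R 0].

Definition rows_of_cols (cs : seq 'cV[F]_3) : seq (seq F) :=
  [seq [seq c k 0 | c : 'cV[F]_3 <- cs] | k : 'I_3 <- [:: 0; 1; 2%:R]].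

Lemma cross_rows_mxE ai bi aj bj ak bk :
  cross_rows_mx ai bi aj bj ak bk =
  mx_of_rows 3 [:: coords (cross ai bi); coords (cross aj bj); coords (cross ak bk)].
Proof.
case: inord_numerals => i0 i1 i2 i0'.
apply/matrixP => i j.
case: i => [[|[|[|//]]] ?]; case: j => [[|[|[|//]]] ?];
  rewrite (col_mx_entry (m1 := 0)) (col_mx_entry (m1 := 0) (m2 := 0)) /= ?inordK //=.
all: by rewrite !mxE /= ?inordK //= ?i0 ?i1 ?i2 ?i0' mxE.
Qed.

(* The explicit instances are needed because the inner blocks have types
   'M_(k.+1, _) once the outer block has been split off. *)
Lemma epipolar_system_mxE ai bi aj bj ak bk :
  epipolar_system_mx ai bi aj bj ak bk =
  mx_of_rows 6 (rows_of_cols [:: bi; - ai; - bj; aj; 0; 0] ++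
                rows_of_cols [:: bi; - ai; 0; 0; - bk; ak]).
Proof.
case: inord_numerals => i0 i1 i2 i0'.
apply/matrixP => i j.
case: i => [[|[|[|[|[|[|//]]]]]] ?]; case: j => [[|[|[|[|[|[|//]]]]]] ?];
  rewrite (col_mx_entry (m1 := 2)) /= ?inordK //=.
all: rewrite ?(row_mx_entry (n1 := 0) (n2 := 4)) ?(row_mx_entry (n1 := 0) (n2 := 3))
   ?(row_mx_entry (n1 := 0) (n2 := 2)) ?(row_mx_entry (n1 := 0) (n2 := 1))
   ?(row_mx_entry (n1 := 0) (n2 := 0)) /= ?inordK //=.
all: by rewrite !mxE /= ?inordK //= ?i0 ?i1 ?i2 ?i0' ?mxE.
Qed.

Lemma det_cross_rows_epipolar_system ai bi aj bj ak bk :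
  \det (cross_rows_mx ai bi aj bj ak bk) =
  \det (epipolar_system_mx ai bi aj bj ak bk).
Proof.
rewrite cross_rows_mxE epipolar_system_mxE !det_mx_of_rows /= !mxE /=.
ring.
Qed.

End EpipolarMatrices.

(* G_ijk and M_ijk are the matrices above with a_s = R q_s' and b_s = q_s''. *)
Theorem theorem2 (F : realFieldType) (Rm : 'M[F]_3)
  (qi' qi'' qj' qj'' qk' qk'' : 'cV[F]_3) :
  is_SO3 Rm ->
  \det (Gmat Rm qi' qi'' qj' qj'' qk' qk'') = \det (Mmat Rm qi' qi'' qj' qj'' qk' qk'') \/
  \det (Gmat Rm qi' qi'' qj' qj'' qk' qk'') = - \det (Mmat Rm qi' qi'' qj' qj'' qk' qk'').
Proof.
move=> _; left.
exact: (det_cross_rows_epipolar_system (Rm *m qi') qi'' (Rm *m qj') qj''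
                                       (Rm *m qk') qk'').
Qed.
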